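(* Consider a solution $(s(t),x(t),o(t))$, $t\ge0$, of the networked SIR epidemic-opinion model described in the context, under the standing assumption stated there. For all $t\ge0$, $$R_{\min}(t)\le R_o(t)\le R_{\max}(t),$$ where $R_o(t)=\rho\big(G(o(t))^{-1}\tilde S(t)B(o(t))\big)$, $R_{\min}(t)=\rho\big(G(\mathbf 1_n)^{-1}\tilde S(t)B(\mathbf 1_n)\big)$ and $R_{\max}(t)=\rho\big(G(\mathbf 0)^{-1}\tilde S(t)B(\mathbf 0)\big)$.
   Context: There are $n$ communities. For $t\ge0$ and $i\in[n]$, $s_i(t),x_i(t),o_i(t)\in[0,1]$ denote the susceptible proportion, infected proportion and opinion of community $i$. The disease transmission network is a directed graph $\mathcal G=(\mathcal V,\mathcal E)$ on $n$ nodes with edge weights $\beta_{ij}>0$ if $(v_j,v_i)\in\mathcal E$ (and $\beta_{ij}=0$ otherwise); $\mathcal N_i=\{v_j:(v_j,v_i)\in\mathcal E\}$. The opinion network is a directed graph $\bar{\mathcal G}$ on the same nodes with nonnegative weights $\bar a_{ij}$ and Laplacian $\bar L=\mathrm{diag}(k_1,\dots,k_n)-\bar A$, $[\bar A]_{ij}=\bar a_{ij}$, $k_i=\sum_j\bar a_{ij}$. For $o\in[0,1]^n$ define the matrix $B(o)$ by $[B(o)]_{ij}=\beta_{ij}-(\beta_{ij}-\beta_{\min})o_i$ for $j\in\mathcal N_i$ and $0$ otherwise, and the diagonal matrix $G(o)$ with $[G(o)]_{ii}=\gamma_{\min}+(\gamma_i-\gamma_{\min})o_i$. Let $\tilde S(t)=\mathrm{diag}(s(t))$.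 The model is $\dot s=-\tilde S B(o)x$, $\dot x=\tilde S B(o)x-G(o)x$, $\dot o=(\mathbf 1_n-s)-(\bar L+I_n)o$. Standing assumption: for all $i$, $s_i(0),x_i(0),o_i(0)\in[0,1]$ with $s_i(0)+x_i(0)\le1$, $\gamma_i\ge\gamma_{\min}>0$, $\beta_{ij}\ge\beta_{\min}>0$ for all $j\in\mathcal N_i$, and $\mathcal G$, $\bar{\mathcal G}$ strongly connected. $\rho(\cdot)$ denotes spectral radius. *)

From HB Require Import structures.
From mathcomp Require Import all_boot all_order all_algebra.
From mathcomp Require Import all_classical all_reals all_analysis.
From mathcomp Require Import complex.
Set Implicit Arguments. Unset Strict Implicit. Unset Printing Implicit Defensive.
Import Order.TTheory GRing.Theory Num.Theory.
Local Open Scope ring_scope.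
Local Open Scope classical_set_scope.

Section Defs.
Variable R : realType.
Variable n : nat.

Definition cmod (z : R[i]) : R :=
  Num.sqrt (complex.Re z ^+ 2 + complex.Im z ^+ 2).

Definition eigenvalueC (A : 'M[R]_n) (l : R[i]) : Prop :=
  exists2 v : 'cV[R[i]]_n, v != 0 &
    map_mx (fun a : R => a%:C%C) A *m v = l *: v.

Definition spectral_radius (A : 'M[R]_n) : R :=
  sup [set cmod l | l in eigenvalueC A].

Definition edge_rel (w : 'M[R]_n) : rel 'I_n := fun j i => 0 < w i j.
Definition strongly_connected (w : 'M[R]_n) : Prop :=
  forall i j : 'I_n, connect (edge_rel w) i j.

Definition Bmat (beta : 'M[R]_n) (bmin : R) (o : 'I_n -> R) : 'M[R]_n :=
  \matrix_(i, j) (if 0 < beta i j then beta i j - (beta i j - bmin) * o i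
                  else 0).

Definition Gmat (gamma : 'I_n -> R) (gmin : R) (o : 'I_n -> R) : 'M[R]_n :=
  \matrix_(i, j) ((i == j)%:R * (gmin + (gamma i - gmin) * o i)).

Definition laplacian (abar : 'M[R]_n) : 'M[R]_n :=
  \matrix_(i, j) ((i == j)%:R * (\sum_k abar i k)) - abar.

Definition Stilde (s : 'I_n -> R) : 'M[R]_n := \matrix_(i, j) ((i == j)%:R * s i).

Definition Rnum beta bmin gamma gmin (s o : 'I_n -> R) : R :=
  spectral_radius (invmx (Gmat gamma gmin o) *m Stilde s *m Bmat beta bmin o).

End Defs.

From HB Require Import structures.
From mathcomp Require Import all_boot all_order all_algebra.
From mathcomp Require Import all_classical all_reals all_analysis.
From mathcomp Require Import complex.
From mathcomp Require Import ring lra.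
Set Implicit Arguments.
Unset Strict Implicit.
Unset Printing Implicit Defensive.
Import Order.TTheory GRing.Theory Num.Theory.
Import numFieldNormedType.Exports.
Local Open Scope ring_scope.
Local Open Scope classical_set_scope.

(* Once s >= 0 and 0 <= o <= 1 are known along the solution, the matrices
   G(o)^-1 S B(o) are entrywise nonnegative and entrywise antitone in o, and
   the spectral radius is monotone on entrywise ordered nonnegative matrices
   (Collatz-Wielandt: an eigenpair (l, v) of A yields w = |v| >= 0 with
   |l| w <= B w, which forces an eigenvalue of B of modulus >= |l|).
   The invariance of s >= 0, o <= 1, x >= 0, s <= s(0) and o >= 0, proved in
   this order, comes from a comparison principle: a coordinate at a new
   minimum -phi has derivative at least -K phi, so it cannot cross the
   barrier -eps exp((2K + 2) t). *)

Section RealInduction.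
Variable R : realType.

Lemma real_induction (a b : R) (P : R -> Prop) : a <= b -> P a ->
  (forall t, a < t <= b -> (forall u, a <= u < t -> P u) -> P t) ->
  (forall t, a <= t < b -> (forall u, a <= u <= t -> P u) ->
     exists2 d, 0 < d & forall u, t < u < t + d -> u <= b -> P u) ->
  forall t, a <= t <= b -> P t.
Proof.
move=> ab Pa left_step right_step.
pose S := [set t | a <= t <= b /\ forall u, a <= u <= t -> P u].
have Sa : S a.
  split; first by rewrite lexx ab.
  by move=> u /andP[au ua]; have -> : u = a by apply/eqP; rewrite eq_le ua au.
have supS : has_sup S by split; [exists a | exists b => t [/andP[]]].
set tau := sup S.
have ub_tau t : S t -> t <= tau by move=> St; exact: sup_upper_bound.
have a_tau : a <= tau by exact: ub_tau.
have tau_b : tau <= b by apply: ge_sup; [exists a | move=> t [/andP[]]].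
have below_tau u : a <= u < tau -> P u.
  move=> /andP[au ut].
  have [e Se] := sup_adherent (ltac:(by rewrite subr_gt0) : 0 < tau - u) supS.
  rewrite opprB addrCA subrr addr0 => ue.
  by case: Se => _; apply; rewrite au ltW.
have upto_tau u : a <= u <= tau -> P u.
  move=> /andP[au ut]; have [->|ne] := eqVneq u tau; last first.
    by apply: below_tau; rewrite au lt_neqAle ne ut.
  have [<-//|ne_a] := eqVneq a tau.
  by apply: left_step => //; rewrite lt_neqAle ne_a a_tau tau_b.
suff tau_eq : tau = b by move=> t /andP[a_t t_b]; apply: upto_tau; rewrite a_t tau_eq t_b.
apply/eqP; rewrite eq_le tau_b leNgt; apply/negP => lt_tau_b.
have [d d0 Pd] := right_step tau (ltac:(by rewrite a_tau lt_tau_b)) upto_tau.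
pose m := Num.min d (b - tau).
have m0 : 0 < m by rewrite lt_min d0 subr_gt0 lt_tau_b.
have [md mb] : m <= d /\ m <= b - tau by rewrite !ge_min !lexx orbT.
have : S (tau + m / 2).
  split; first by apply/andP; split; lra.
  move=> u /andP[au um]; have [ut|tu] := leP u tau; first by apply: upto_tau; rewrite au ut.
  by apply: Pd; lra.
by move/ub_tau; lra.
Qed.

End RealInduction.

Section NonnegativeMatrices.
Variable R : realType.

Definition mx_nonneg {m p} (A : 'M[R]_(m, p)) : Prop := forall i j, 0 <= A i j.

Lemma mulmx_nonneg m p q (A : 'M[R]_(m, p)) (B : 'M[R]_(p, q)) :
  mx_nonneg A -> mx_nonneg B -> mx_nonneg (A *m B).
Proof.
by move=> A0 B0 i j; rewrite mxE; apply: sumr_ge0 => k _; apply: mulr_ge0.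
Qed.

Variable n : nat.

Definition l1norm (A : 'M[R]_n) : R := \sum_i \sum_j `|A i j|.

Lemma l1norm_ge0 (A : 'M[R]_n) : 0 <= l1norm A.
Proof. by apply: sumr_ge0 => i _; apply: sumr_ge0. Qed.

Lemma ler_row_l1norm (A : 'M[R]_n) i : \sum_j `|A i j| <= l1norm A.
Proof.
rewrite /l1norm [X in _ <= X](bigD1 i) //= lerDl.
by apply: sumr_ge0 => k _; apply: sumr_ge0.
Qed.

Lemma ler_norm_sum_l1norm (A : 'M[R]_n) (v : 'I_n -> R) c i :
  (forall j, `|v j| <= c) -> `|\sum_j A i j * v j| <= l1norm A * c.
Proof.
move=> v_le; have c0 : 0 <= c by apply: le_trans (normr_ge0 _) (v_le i).
apply: le_trans (ler_norm_sum _ _ _) _.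
apply: le_trans (_ : \sum_j `|A i j| * c <= _).
  by apply: ler_sum => j _; rewrite normrM ler_wpM2l.
by rewrite -mulr_suml ler_wpM2r // ler_row_l1norm.
Qed.

Lemma sum_mul_ge_l1norm (A : 'M[R]_n) (v : 'I_n -> R) c i : mx_nonneg A ->
  0 <= c -> (forall j, - c <= v j) -> - (c * l1norm A) <= \sum_j A i j * v j.
Proof.
move=> A0 c0 v_ge; apply: le_trans (_ : \sum_j A i j * - c <= _); last first.
  by apply: ler_sum => j _; apply: ler_wpM2l.
rewrite -mulr_suml mulrN lerN2 mulrC ler_wpM2l //.
by apply: le_trans (ler_row_l1norm A i); apply: ler_sum => j _; rewrite ger0_norm.
Qed.

Lemma ler_l1normD (A B : 'M[R]_n) : l1norm (A + B) <= l1norm A + l1norm B.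
Proof.
rewrite /l1norm -big_split /=; apply: ler_sum => i _.
by rewrite -big_split /=; apply: ler_sum => j _; rewrite mxE ler_normD.
Qed.

Lemma l1normZ c (A : 'M[R]_n) : l1norm (c *: A) = `|c| * l1norm A.
Proof.
rewrite /l1norm mulr_sumr; apply: eq_bigr => i _.
by rewrite mulr_sumr; apply: eq_bigr => j _; rewrite mxE normrM.
Qed.

Lemma ler_l1normM (A B : 'M[R]_n) : l1norm (A *m B) <= l1norm A * l1norm B.
Proof.
rewrite /l1norm mulr_suml; apply: ler_sum => i _.
apply: le_trans (_ : \sum_j \sum_k `|A i k| * `|B k j| <= _).
  apply: ler_sum => j _; rewrite mxE; apply: le_trans (ler_norm_sum _ _ _) _.
  by apply: ler_sum => k _; rewrite normrM.
rewrite exchange_big /= mulr_suml; apply: ler_sum => k _.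
by rewrite -mulr_sumr; apply: ler_wpM2l => //; exact: ler_row_l1norm.
Qed.

(* A most negative entry of Y would satisfy Y_ij >= c |Z| Y_ij > Y_ij. *)
Lemma mx_nonneg_fixpoint (Y X Z : 'M[R]_n) (c : R) :
  mx_nonneg X -> mx_nonneg Z -> 0 <= c -> c * l1norm Z < 1 ->
  Y = X + c *: (Z *m Y) -> mx_nonneg Y.
Proof.
move=> X0 Z0 c0 cZ1 eY i0 j0.
pose F (p : 'I_n * 'I_n) := Y p.1 p.2.
have [[i j] _ Ymin] := @arg_minP _ _ _ (i0, j0) predT F isT.
rewrite leNgt; apply/negP => Y0.
have Yij0 : Y i j < 0 by apply: le_lt_trans (Ymin (i0, j0) isT) Y0.
have : c * (l1norm Z * Y i j) <= Y i j.
  rewrite {2}eY !mxE; apply: le_trans (_ : 0 + c * (\sum_k Z i k * Y k j) <= _).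
    rewrite add0r; apply: ler_wpM2l => //.
    apply: le_trans (_ : \sum_k Z i k * Y i j <= _).
      rewrite -mulr_suml; apply: ler_wnM2r; first exact: ltW.
      by apply: le_trans (ler_row_l1norm Z i); apply: ler_sum => k _; rewrite ger0_norm.
    by apply: ler_sum => k _; apply: ler_wpM2l => //; exact: (Ymin (k, j)).
  by apply: lerD => //; rewrite mxE.
have := mulr_ge0 c0 (l1norm_ge0 Z); rewrite mulrA; nra.
Qed.

Definition resolvent (C : 'M[R]_n) (t : R) := invmx (1%:M - t *: C).

Section Resolvent.
Variable C : 'M[R]_n.
Hypothesis C_ge0 : mx_nonneg C.
Hypothesis C_reg : forall t, 0 <= t <= 1 -> (1%:M - t *: C) \in unitmx.

Lemma resolventE t u : 0 <= t <= 1 -> 0 <= u <= 1 ->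
  resolvent C u = resolvent C t + (u - t) *: (resolvent C t *m C *m resolvent C u).
Proof.
move=> /C_reg Ut /C_reg Uu.
have E : (u - t) *: C = (1%:M - t *: C) - (1%:M - u *: C).
  by apply/matrixP => i j; rewrite !mxE; ring.
rewrite scalemxAl scalemxAr E mulmxBr mulmxBl mulVmx // mul1mx.
by rewrite -mulmxA mulmxV // mulmx1 [RHS]addrC subrK.
Qed.

Lemma resolvent_ge0_step a b : 0 <= a <= b -> b <= 1 ->
  mx_nonneg (resolvent C a) -> (b - a) * l1norm (resolvent C a *m C) < 1 ->
  mx_nonneg (resolvent C b).
Proof.
move=> /andP[a0 ab] b1 Ma0 small.
apply: (mx_nonneg_fixpoint Ma0 _ _ small); first exact: mulmx_nonneg.
  by rewrite subr_ge0.
by apply: resolventE; lra.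
Qed.

Lemma l1norm_resolvent_near t u : 0 <= t <= 1 -> 0 <= u <= 1 ->
  `|u - t| * l1norm (resolvent C t *m C) <= 1 / 2 ->
  l1norm (resolvent C u) <= 2 * l1norm (resolvent C t).
Proof.
move=> It Iu near.
have : l1norm (resolvent C u) <=
    l1norm (resolvent C t) + `|u - t| * l1norm (resolvent C t *m C) * l1norm (resolvent C u).
  rewrite {1}(resolventE It Iu); apply: le_trans (ler_l1normD _ _) _.
  by rewrite lerD2l l1normZ -mulrA ler_wpM2l ?ler_l1normM.
have := l1norm_ge0 (resolvent C u); nra.
Qed.

(* For u just below t, |M_u| <= 2 |M_t|, which bounds the admissible step
   from u up to t in terms of t alone. *)
Lemma resolvent_ge0_left t : 0 < t <= 1 ->
  (forall u, 0 <= u < t -> mx_nonneg (resolvent C u)) -> mx_nonneg (resolvent C t).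
Proof.
move=> /andP[t0 t1] below.
have a0 := l1norm_ge0 (resolvent C t *m C).
have b0 := l1norm_ge0 (resolvent C t); have c0 := l1norm_ge0 C.
set a := l1norm (resolvent C t *m C) in a0 *.
set b := l1norm (resolvent C t) in b0 *.
set q := 2 * a + 2 * (b * l1norm C) + 1.
have q0 : 0 < q by rewrite /q; have := mulr_ge0 b0 c0; lra.
pose h := Num.min t q^-1.
have h0 : 0 < h by rewrite lt_min t0 invr_gt0 q0.
have ht : h <= t by rewrite ge_min lexx.
have hq : h * q <= 1 by rewrite -ler_pdivlMr // div1r ge_min lexx orbT.
have norm_u : l1norm (resolvent C (t - h)) <= 2 * b.
  apply: l1norm_resolvent_near; try lra.
  rewrite (_ : t - h - t = - h); last by ring.
  have : 0 <= h * (b * l1norm C) by rewrite !mulr_ge0 // ltW.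
  by rewrite normrN gtr0_norm // -/a; move: hq; rewrite /q; nra.
apply: (@resolvent_ge0_step (t - h)); try lra.
  by apply: below; lra.
rewrite (_ : t - (t - h) = h); last by ring.
apply: (@le_lt_trans _ _ (h * (2 * b * l1norm C))).
  rewrite ler_pM2l //; apply: le_trans (ler_l1normM _ _) _.
  exact: ler_wpM2r.
have := mulr_ge0 (ltW h0) a0; move: hq; rewrite /q; nra.
Qed.

Lemma resolvent_ge0 : mx_nonneg (resolvent C 1).
Proof.
apply: (@real_induction R 0 1 (fun t => mx_nonneg (resolvent C t))) => //.
- by move=> i j; rewrite /resolvent scale0r subr0 invmx1 mxE; case: (i == j).
- by move=> t /andP[t0 t1]; apply: resolvent_ge0_left; rewrite t0 t1.
- move=> t /andP[t0 t1] upto.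
  have K0 := l1norm_ge0 (resolvent C t *m C).
  set K := l1norm _ in K0.
  exists (K + 1)^-1; first by rewrite invr_gt0; lra.
  move=> u /andP[tu ud] u1.
  apply: (@resolvent_ge0_step t) => //; first by rewrite t0 ltW.
    by apply: upto; rewrite t0 lexx.
  have : (u - t) * (K + 1) < 1 by rewrite -ltr_pdivlMr ?div1r; lra.
  by rewrite -/K; nra.
- by rewrite ler01 lexx.
Qed.

End Resolvent.

(* If I - tB/r were invertible for all t in [0, 1], the nonnegative inverse
   (I - B/r)^-1 would map the nonpositive vector (I - B/r) w back to w. *)
Lemma collatz_wielandt (B : 'M[R]_n) (w : 'cV[R]_n) (r : R) : 0 < r ->
  mx_nonneg B -> mx_nonneg w -> w != 0 ->
  (forall i, r * w i 0 <= (B *m w) i 0) ->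
  exists mu, exists2 v : 'cV[R]_n, v != 0 & r <= mu /\ B *m v = mu *: v.
Proof.
move=> r0 B0 w0 w_neq0 Bw.
set C := r^-1 *: B.
have C0 : mx_nonneg C by move=> i j; rewrite mxE mulr_ge0 // invr_ge0 ltW.
have [[t /andP[t0 t1] dt]|nodet] :=
  pselect (exists2 t, 0 < t <= 1 & \det (1%:M - t *: C) = 0).
  have /det0P [v v0 hv] : \det (1%:M - t *: C)^T == 0 by rewrite det_tr dt.
  exists (r / t); exists v^T.
    by apply: contra v0 => /eqP h; rewrite -[v]trmxK h linear0.
  split; first by rewrite ler_pdivlMr // ger_pMr.
  have : (1%:M - t *: C) *m v^T = 0.
    by rewrite -[_ *m _]trmxK trmx_mul trmxK hv linear0.
  rewrite mulmxBl mul1mx => /eqP; rewrite subr_eq0 -scalemxAl /C -scalemxAl.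
  move=> /eqP Cv.
  apply: (@scalerI _ _ (t / r)); first by rewrite mulf_neq0 // ?invr_eq0 gt_eqF.
  by rewrite scalerA mulrA divfK ?gt_eqF // divff ?gt_eqF // scale1r [RHS]Cv scalerA mulrC.
exfalso; apply/negP: w_neq0; rewrite negbK.
have C_reg t : 0 <= t <= 1 -> (1%:M - t *: C) \in unitmx.
  move=> /andP[t0 t1]; rewrite unitmxE unitfE.
  have [->|tn0] := eqVneq t 0; first by rewrite scale0r subr0 det1 oner_neq0.
  by apply/eqP => dt; apply: nodet; exists t; rewrite // lt_neqAle eq_sym tn0 t0.
have Cw_le0 i : ((1%:M - 1 *: C) *m w) i 0 <= 0.
  rewrite scale1r mulmxBl mul1mx !mxE subr_le0.
  have -> : \sum_j C i j * w j 0 = r^-1 * (B *m w) i 0.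
    by rewrite mxE mulr_sumr; apply: eq_bigr => j _; rewrite mxE mulrA.
  by rewrite -(ler_pM2l r0) mulrA mulfV ?gt_eqF // mul1r.
have w_eq : w = resolvent C 1 *m ((1%:M - 1 *: C) *m w).
  by rewrite mulmxA mulVmx ?mul1mx // C_reg // ler01 lexx.
have w_le0 i : w i 0 <= 0.
  rewrite w_eq mxE; apply: sumr_le0 => k _.
  by apply: mulr_ge0_le0; [exact: resolvent_ge0 | exact: Cw_le0].
by apply/eqP/matrixP => i j; rewrite (ord1 j) mxE; apply/eqP; rewrite eq_le w_le0 w0.
Qed.

End NonnegativeMatrices.

Lemma cV_neq0_entry (V : nmodType) m (v : 'cV[V]_m) : v != 0 -> exists j, v j 0 != 0.
Proof.
move=> v0; apply/existsP; apply: contraNT v0 => /existsPn v_eq0.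
by apply/eqP/matrixP => i k; rewrite (ord1 k) mxE; apply/eqP/negbNE/v_eq0.
Qed.

Section SpectralRadius.
Variables (R : realType) (n : nat).
Local Open Scope complex_scope.

Lemma cmodE (z : R[i]) : cmod z = Normc.normc z.
Proof. by case: z. Qed.

Lemma cmod_ge0 (z : R[i]) : 0 <= cmod z.
Proof. exact: sqrtr_ge0. Qed.

Lemma cmodM (x y : R[i]) : cmod (x * y) = cmod x * cmod y.
Proof. by rewrite !cmodE Normc.normcM. Qed.

Lemma cmod_real (a : R) : cmod a%:C = `|a|.
Proof. by rewrite /cmod /= expr0n /= addr0 sqrtr_sqr. Qed.

Lemma cmod_eq0 (z : R[i]) : (cmod z == 0) = (z == 0).
Proof.
apply/eqP/eqP => [|->]; first by rewrite cmodE; exact: Normc.eq0_normc.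
by rewrite cmod_real normr0.
Qed.

Lemma ler_cmod_sum (I : Type) (r : seq I) (F : I -> R[i]) :
  cmod (\sum_(i <- r) F i) <= \sum_(i <- r) cmod (F i).
Proof.
elim/big_ind2: _ => [|r1 z1 r2 z2 le1 le2|//]; first by rewrite cmod_real normr0.
by rewrite cmodE; apply: le_trans (le_normcD z1 z2) _; rewrite -!cmodE lerD.
Qed.

Lemma cmod_eigenvector_le (A : 'M[R]_n) l (v : 'cV[R[i]]_n) i :
  map_mx (fun a : R => a%:C) A *m v = l *: v ->
  cmod l * cmod (v i 0) <= \sum_j `|A i j| * cmod (v j 0).
Proof.
move=> /matrixP /(_ i 0); rewrite !mxE -cmodM => <-.
apply: le_trans (ler_cmod_sum _ _) _; apply: ler_sum => j _.
by rewrite cmodM mxE cmod_real.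
Qed.

Lemma cmod_eigenvalue_le (B : 'M[R]_n) l : eigenvalueC B l -> cmod l <= l1norm B.
Proof.
case=> v v_neq0 Bv; have [j vj] := cV_neq0_entry v_neq0.
pose c k := cmod (v k 0).
have c0 k : 0 <= c k by exact: cmod_ge0.
have ck_le k : c k <= \sum_k c k by rewrite (bigD1 k) //= lerDl sumr_ge0.
have S0 : 0 < \sum_k c k.
  by apply: lt_le_trans (ck_le j); rewrite lt_neqAle eq_sym cmod_eq0 vj c0.
rewrite -(ler_pM2r S0) mulr_sumr /l1norm mulr_suml.
apply: ler_sum => i _; apply: le_trans (cmod_eigenvector_le i Bv) _.
by rewrite mulr_suml; apply: ler_sum => k _; apply: ler_wpM2l => //; exact: ck_le.
Qed.

Lemma eigenvalue_dominated (A B : 'M[R]_n) l :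
  mx_nonneg A -> (forall i j, A i j <= B i j) ->
  eigenvalueC A l -> 0 < cmod l ->
  exists2 m, eigenvalueC B m & cmod l <= cmod m.
Proof.
move=> A0 AB [v v_neq0 Av] l0; have [j vj] := cV_neq0_entry v_neq0.
pose w : 'cV[R]_n := \col_k cmod (v k 0).
have w0 : mx_nonneg w by move=> i k; rewrite mxE cmod_ge0.
have w_neq0 : w != 0.
  by apply/negP => /eqP/matrixP/(_ j 0); rewrite !mxE => /eqP; rewrite cmod_eq0 (negbTE vj).
have B0 : mx_nonneg B by move=> i k; apply: le_trans (AB i k).
have Bw i : cmod l * w i 0 <= (B *m w) i 0.
  rewrite mxE; apply: le_trans (cmod_eigenvector_le i Av) _; rewrite mxE.
  apply: ler_sum => k _; rewrite mxE ger0_norm //.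
  by apply: ler_wpM2r; [apply: cmod_ge0 | apply: AB].
have [mu [u u_neq0 [l_mu Bu]]] := collatz_wielandt l0 B0 w0 w_neq0 Bw.
exists mu%:C; last by rewrite cmod_real ger0_norm // (le_trans (cmod_ge0 l)).
exists (map_mx (fun a : R => a%:C) u).
  apply: contra u_neq0 => /eqP /matrixP u0; apply/eqP/matrixP => i k.
  by have := u0 i k; rewrite !mxE => -[].
apply/matrixP => i k; rewrite !mxE -rmorphM.
move: Bu => /matrixP /(_ i k); rewrite !mxE => <-.
by rewrite rmorph_sum; apply: eq_bigr => m _; rewrite !mxE rmorphM.
Qed.

Lemma spectral_radius_le (A B : 'M[R]_n) :
  mx_nonneg A -> (forall i j, A i j <= B i j) ->
  spectral_radius A <= spectral_radius B.
Proof.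
move=> A0 AB; rewrite /spectral_radius.
set SA := [set cmod l | l in eigenvalueC A].
set SB := [set cmod l | l in eigenvalueC B].
have SB_ub : ubound SB (l1norm B) by move=> y [l Bl <-]; apply: cmod_eigenvalue_le.
have le_supB m : eigenvalueC B m -> cmod m <= sup SB.
  move=> Bm; apply: sup_upper_bound; last by exists m.
  by split; [exists (cmod m), m | exists (l1norm B)].
have supB_ge0 : 0 <= sup SB.
  have [->|/set0P[_ [m Bm _]]] := eqVneq SB set0; first by rewrite sup0.
  exact: le_trans (cmod_ge0 m) (le_supB m Bm).
have [->|/set0P SA_n0] := eqVneq SA set0; first by rewrite sup0.
apply: ge_sup => // _ [m Am <-].
have [->//|m_neq0] := eqVneq (cmod m) 0.
have m_gt0 : 0 < cmod m by rewrite lt_neqAle eq_sym m_neq0 cmod_ge0.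
have [m' Bm' le_m] := eigenvalue_dominated A0 AB Am m_gt0.
exact: le_trans le_m (le_supB m' Bm').
Qed.

End SpectralRadius.

Section Comparison.
Variable R : realType.

Lemma within_ge0_lt_near (f : R -> R) (x z : R) :
  {within [set t | 0 <= t], continuous f} -> 0 <= x -> f x < z ->
  exists2 d, 0 < d & forall u, 0 <= u -> `|u - x| < d -> f u < z.
Proof.
move=> cf x0 fxz; have := (subspace_continuousP _ f).1 cf x x0.
move=> /cvgr_lt /(_ z fxz); rewrite near_withinE => /nbhs_ballP [e e0 fe].
by exists e => // u u0 ux; apply: fe; rewrite // /ball /= distrC.
Qed.

Lemma within_ge0_gt_near (f : R -> R) (x z : R) :
  {within [set t | 0 <= t], continuous f} -> 0 <= x -> z < f x ->
  exists2 d, 0 < d & forall u, 0 <= u -> `|u - x| < d -> z < f u.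
Proof.
move=> cf x0 zfx; have := (subspace_continuousP _ f).1 cf x x0.
move=> /cvgr_gt /(_ z zfx); rewrite near_withinE => /nbhs_ballP [e e0 fe].
by exists e => // u u0 ux; apply: fe; rewrite // /ball /= distrC.
Qed.

Lemma within_ge0_bounded (I : finType) (f : I -> R -> R) (T : R) :
  (forall i, {within [set t | 0 <= t], continuous (f i)}) -> 0 <= T ->
  exists2 K, 0 <= K & forall i t, 0 <= t <= T -> `|f i t| <= K.
Proof.
move=> f_cont T0.
have bounded_at i : exists K, forall t, 0 <= t <= T -> `|f i t| <= K.
  have cf : {within `[0, T], continuous (f i)}.
    by apply: continuous_subspaceW (f_cont i) => u /=; rewrite in_itv /= => /andP[].
  have [c1 _ f_le] := EVT_max T0 cf; have [c2 _ f_ge] := EVT_min T0 cf.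
  exists (`|f i c1| + `|f i c2|) => t tT; have tI : t \in `[0, T]%R by rewrite in_itv.
  have := f_le _ tI; have := f_ge _ tI.
  have := ler_norm (f i c1); have := ler_norm (- f i c2).
  have := normr_ge0 (f i c1); have := normr_ge0 (f i c2).
  by rewrite normrN ler_norml => *; apply/andP; split; lra.
have [K K_ub] := choice bounded_at.
exists (\sum_i `|K i|) => [|i t tT]; first exact: sumr_ge0.
apply: le_trans (K_ub i t tT) _; apply: le_trans (ler_norm (K i)) _.
by rewrite (bigD1 i) //= lerDl sumr_ge0.
Qed.

Lemma is_derive_left_lt (f : R -> R) (t d c : R) : is_derive t 1 f d -> c < d ->
  exists2 e, 0 < e & forall h, 0 < h < e -> f (t - h) < f t - c * h.
Proof.
move=> [df <-] cd.
have : (fun h => h^-1 *: ((f \o shift t) (h *: 1) - f t)) @ 0^' --> 'D_1 f t.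
  exact: df.
move=> /cvgr_gt /(_ c cd); rewrite near_withinE => /nbhs_ballP [e e0 fe].
exists e => // h /andP[h0 he].
have := fe (- h); rewrite /ball /= sub0r !normrN gtr0_norm // oppr_eq0 gt_eqF //.
move=> /(_ he isT); rewrite -[(- h)%:A]/(- h * 1) mulr1 (addrC (- h)) invrN scaleNr.
rewrite -[_ *: _]/(h^-1 * (f (t - h) - f t)) -(ltr_pM2l h0) mulrN mulrA.
by rewrite mulfV ?gt_eqF // mul1r; lra.
Qed.

Lemma common_pos_radius (n : nat) (Q : 'I_n -> R -> Prop) :
  (forall j d d', 0 < d' <= d -> Q j d -> Q j d') ->
  (forall j, exists2 d, 0 < d & Q j d) -> exists2 d, 0 < d & forall j, Q j d.
Proof.
move=> Q_anti exQ.
have [D DP] : {D : 'I_n -> R & forall j, 0 < D j /\ Q j (D j)}.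
  apply: (@choice _ _ (fun j d => 0 < d /\ Q j d)) => j.
  by have [d d0 Qd] := exQ j; exists d.
have minD_gt0 : 0 < \big[Num.min/1]_j D j.
  by elim/big_ind: _ => // [a b a0 b0|j _]; [rewrite lt_min a0 b0 | case: (DP j)].
exists (\big[Num.min/1]_j D j) => // j; apply: (Q_anti j (D j)); last by case: (DP j).
by rewrite minD_gt0 (bigD1 j) //= ge_min lexx.
Qed.

Lemma expRN_le (x : R) : 0 <= x <= 1 -> expR (- x) <= 1 - x / 2.
Proof.
move=> /andP[x0 x1]; have := expR_ge1Dx x; have E0 := expR_gt0 x.
by rewrite expRN -div1r ler_pdivrMr //; nra.
Qed.

(* Lower barrier [- eps * exp (L t)]: when a coordinate first touches it
   at time u, it was above it just before, so its left derivative there is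
   at most the barrier's slope [- L phi], against the bound [- K phi]. *)
Section Barrier.
Variables (n : nat) (y dy : 'I_n -> R -> R) (T K eps : R).
Hypothesis y_cont : forall i, {within [set t : R | 0 <= t], continuous (y i)}.
Hypothesis y_deriv : forall i (t : R), 0 < t -> is_derive t 1 (y i) (dy i t).
Hypothesis K_ge0 : 0 <= K.
Hypothesis eps_gt0 : 0 < eps.
Hypothesis dy_at_min : forall (t : R) i phi, 0 < t <= T -> 0 < phi ->
  (forall j, - phi <= y j t) -> y i t = - phi -> - (K * phi) <= dy i t.

Let L := 2 * K + 2.
Let barrier u := forall j, - (eps * expR (L * u)) < y j u.

Lemma barrier_left u : 0 < u <= T -> (forall v, 0 <= v < u -> barrier v) -> barrier u.
Proof.
move=> /andP[u0 uT] before.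
have L0 : 0 < L by rewrite /L; have := K_ge0; lra.
set phi := eps * expR (L * u).
have phi0 : 0 < phi by rewrite mulr_gt0 ?expR_gt0.
have y_ge j : - phi <= y j u.
  rewrite leNgt; apply/negP => y_lt.
  have [d d0 near_u] := within_ge0_lt_near (@y_cont j) (ltW u0) y_lt.
  pose v := Num.max 0 (u - d / 2).
  have [v0 vd] : 0 <= v /\ u - d / 2 <= v by rewrite !le_max !lexx orbT.
  have vu : v < u by rewrite gt_max u0 /=; lra.
  have := near_u v v0 (ltac:(rewrite distrC ger0_norm ?subr_ge0 ?ltW //; lra)).
  have := before v (ltac:(by rewrite v0 vu)) j.
  have : expR (L * v) <= expR (L * u) by rewrite ler_expR ler_pM2l // ltW.
  by move=> /(ler_wpM2l (ltW eps_gt0)); rewrite -/phi; lra.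
move=> j; rewrite lt_neqAle y_ge andbT; apply/negP => /eqP y_eq.
have := @dy_at_min u j phi (ltac:(by rewrite u0 uT)) phi0 y_ge (esym y_eq).
move=> dy_ge; have dy_gt : - ((K + 1) * phi) < dy j u by lra.
have [e e0 left_lt] := is_derive_left_lt (@y_deriv j u u0) dy_gt.
pose m := Num.min u (Num.min L^-1 e).
have m0 : 0 < m by rewrite !lt_min u0 e0 invr_gt0 L0.
have [mu mL me] : [/\ m <= u, m <= L^-1 & m <= e] by rewrite !ge_min !lexx !orbT.
have Lm : L * m <= 1 by rewrite -[1](@mulfV _ L) ?gt_eqF // ler_pM2l.
pose h := m / 2.
have := left_lt h (ltac:(rewrite /h; apply/andP; split; lra)).
have := before (u - h) (ltac:(rewrite /h; apply/andP; split; lra)) j.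
rewrite (_ : L * (u - h) = L * u + - (L * h)); last by ring.
rewrite expRD mulrA -y_eq -/phi.
have Lh : 0 <= L * h <= 1 by rewrite /h; apply/andP; split; nra.
have := ler_wpM2l (ltW phi0) (expRN_le Lh).
have -> : phi * (1 - L * h / 2) = phi - (K + 1) * phi * h by rewrite /L; field.
lra.
Qed.

Lemma barrier_right u : 0 <= u < T -> (forall v, 0 <= v <= u -> barrier v) ->
  exists2 d, 0 < d & forall v, u < v < u + d -> v <= T -> barrier v.
Proof.
move=> /andP[u0 uT] upto.
have L0 : 0 < L by rewrite /L; have := K_ge0; lra.
have at_u := upto u (ltac:(by rewrite u0 lexx)).
have [d d0 near_u] := common_pos_radius
  (Q := fun j d => forall v, 0 <= v -> `|v - u| < d -> - (eps * expR (L * u)) < y j v)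
  (fun j d d' dd H v v0 vd => H v v0 (lt_le_trans vd (proj2 (andP dd))))
  (fun j => within_ge0_gt_near (@y_cont j) u0 (at_u j)).
exists d => // v /andP[uv vd] vT j.
have v0 : 0 <= v by apply: le_trans u0 (ltW uv).
have := near_u j v v0 (ltac:(rewrite gtr0_norm ?subr_gt0 //; lra)).
have : expR (L * u) <= expR (L * v) by rewrite ler_expR ler_pM2l // ltW.
by move=> /(ler_wpM2l (ltW eps_gt0)); lra.
Qed.

Lemma barrier_on : (forall j, 0 <= y j 0) -> 0 <= T -> forall u, 0 <= u <= T -> barrier u.
Proof.
move=> y0 T0; apply: real_induction => //.
- by move=> j; rewrite mulr0 expR0 mulr1; have := y0 j; have := eps_gt0; lra.
- exact: barrier_left.
- exact: barrier_right.
Qed.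

End Barrier.

Lemma ge0_of_quasi_positive (n : nat) (y dy : 'I_n -> R -> R) :
  (forall i, {within [set t : R | 0 <= t], continuous (y i)}) ->
  (forall i, 0 <= y i 0) ->
  (forall i (t : R), 0 < t -> is_derive t 1 (y i) (dy i t)) ->
  (forall T : R, 0 < T -> exists2 K : R, 0 <= K &
     forall (t : R) i (phi : R), 0 < t <= T -> 0 < phi ->
       (forall j, - phi <= y j t) -> y i t = - phi -> - (K * phi) <= dy i t) ->
  forall (t : R) i, 0 <= t -> 0 <= y i t.
Proof.
move=> y_cont y0 y_deriv dy_bound t i t0.
have [K K0 dy_at_min] := dy_bound (t + 1) (ltac:(lra)).
rewrite leNgt; apply/negP => yt_lt0.
have E0 := expR_gt0 ((2 * K + 2) * t).
pose eps := - y i t / 2 / expR ((2 * K + 2) * t).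
have eps0 : 0 < eps by rewrite /eps divr_gt0 //; lra.
have T0 : 0 <= t + 1 by lra.
have tT : 0 <= t <= t + 1 by apply/andP; split; lra.
have := barrier_on y_cont y_deriv K0 eps0 dy_at_min y0 T0 tT i.
by rewrite /eps divfK ?gt_eqF //; lra.
Qed.

Lemma ge0_of_inward (n : nat) (y dy : 'I_n -> R -> R) :
  (forall i, {within [set t : R | 0 <= t], continuous (y i)}) ->
  (forall i, 0 <= y i 0) ->
  (forall i (t : R), 0 < t -> is_derive t 1 (y i) (dy i t)) ->
  (forall (t : R) i (phi : R), 0 < t -> 0 < phi ->
     (forall j, - phi <= y j t) -> y i t = - phi -> 0 <= dy i t) ->
  forall (t : R) i, 0 <= t -> 0 <= y i t.
Proof.
move=> y_cont y0 y_deriv inward; apply: ge0_of_quasi_positive => // T _.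
exists 0 => // t i phi /andP[t0 _] phi0 y_ge y_eq.
rewrite mul0r oppr0; exact: (inward t i phi t0 phi0 y_ge y_eq).
Qed.

End Comparison.

Lemma invmx_diag (F : fieldType) n (d : 'I_n -> F) : (forall k, d k != 0) ->
  invmx (diag_mx (\row_k d k)) = diag_mx (\row_k (d k)^-1).
Proof.
move=> d_neq0.
have dV : diag_mx (\row_k d k) *m diag_mx (\row_k (d k)^-1) = 1%:M.
  by rewrite mulmx_diag; apply/matrixP => i j; rewrite !mxE mulfV.
have [d_unit _] := mulmx1_unit dV.
by rewrite -[RHS]mul1mx -(mulVmx d_unit) -mulmxA dV mulmx1.
Qed.

Section Model.
Variables (R : realType) (n : nat).
Variables (beta : 'M[R]_n) (bmin : R) (gamma : 'I_n -> R) (gmin : R).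

Lemma Stilde_diag (s : 'I_n -> R) : Stilde s = diag_mx (\row_k s k).
Proof. by apply/matrixP => i j; rewrite !mxE mulrC mulr_natr. Qed.

Lemma Gmat_diag (o : 'I_n -> R) :
  Gmat gamma gmin o = diag_mx (\row_k (gmin + (gamma k - gmin) * o k)).
Proof. by apply/matrixP => i j; rewrite !mxE mulrC mulr_natr. Qed.

Lemma Stilde_mulmx_col (s xv : 'I_n -> R) (M : 'M[R]_n) i :
  (Stilde s *m M *m \col_k xv k) i 0 = s i * \sum_j M i j * xv j.
Proof.
rewrite Stilde_diag -mulmxA mul_diag_mx !mxE; congr (_ * _).
by apply: eq_bigr => j _; rewrite mxE.
Qed.

Lemma Gmat_mulmx_col (o xv : 'I_n -> R) i :
  (Gmat gamma gmin o *m \col_k xv k) i 0 = (gmin + (gamma i - gmin) * o i) * xv i.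
Proof. by rewrite Gmat_diag mul_diag_mx !mxE. Qed.

Lemma laplacian_mulmx_col (abar : 'M[R]_n) (ov : 'I_n -> R) i :
  ((laplacian abar + 1%:M) *m \col_k ov k) i 0 =
  (\sum_k abar i k + 1) * ov i - \sum_j abar i j * ov j.
Proof.
set c := \sum_k abar i k + 1.
rewrite mxE (eq_bigr (fun j => (i == j)%:R * (c * ov j) - abar i j * ov j)).
  rewrite sumrB (bigD1 i) //= eqxx mul1r big1 ?addr0 // => j /negbTE.
  by rewrite eq_sym => ->; rewrite mul0r.
by move=> j _; rewrite !mxE /c; ring.
Qed.

Lemma l1norm_Bmat_le (o : 'I_n -> R) c : (forall i, `|o i| <= c) ->
  l1norm (Bmat beta bmin o) <= \sum_i \sum_j (`|beta i j| + `|beta i j - bmin| * c).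
Proof.
move=> o_le; apply: ler_sum => i _; apply: ler_sum => j _; rewrite mxE.
have c0 : 0 <= c by apply: le_trans (o_le i).
case: ifP => _; last by rewrite normr0 addr_ge0 ?mulr_ge0.
apply: le_trans (ler_normB _ _) _; rewrite normrM lerD2l.
by apply: ler_wpM2l.
Qed.

Hypothesis bmin_ge0 : 0 <= bmin.
Hypothesis beta_ge_bmin : forall i j, 0 < beta i j -> bmin <= beta i j.

Lemma Bmat_ge0 (o : 'I_n -> R) : (forall i, o i <= 1) -> mx_nonneg (Bmat beta bmin o).
Proof.
move=> o_le1 i j; rewrite mxE; case: ifP => // /beta_ge_bmin bij.
have := bmin_ge0; have := o_le1 i; have : 0 <= beta i j - bmin by rewrite subr_ge0.
by nra.
Qed.

Lemma Bmat_le (o o' : 'I_n -> R) i j : o i <= o' i ->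
  Bmat beta bmin o' i j <= Bmat beta bmin o i j.
Proof.
move=> oo'; rewrite !mxE; case: ifP => // /beta_ge_bmin bij.
by rewrite lerD2l lerN2 ler_wpM2l // subr_ge0.
Qed.

Hypothesis gmin_gt0 : 0 < gmin.
Hypothesis gamma_ge_gmin : forall i, gmin <= gamma i.

Lemma Gmat_entry_gt0 (o : 'I_n -> R) k : 0 <= o k -> 0 < gmin + (gamma k - gmin) * o k.
Proof. by move=> o0; have := gamma_ge_gmin k; have := gmin_gt0; nra. Qed.

Lemma Rnum_mxE (s o : 'I_n -> R) i j : (forall k, 0 <= o k) ->
  (invmx (Gmat gamma gmin o) *m Stilde s *m Bmat beta bmin o) i j =
  (gmin + (gamma i - gmin) * o i)^-1 * (s i * Bmat beta bmin o i j).
Proof.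
move=> o0; have g_neq0 k : gmin + (gamma k - gmin) * o k != 0.
  by rewrite gt_eqF ?Gmat_entry_gt0.
rewrite Gmat_diag (invmx_diag g_neq0) Stilde_diag.
by rewrite mulmx_diag mul_diag_mx !mxE mulrA.
Qed.

(* Entrywise, G(o)^-1 S B(o) decreases in o: G grows and B shrinks. *)
Lemma Rnum_le (s o o' : 'I_n -> R) : (forall k, 0 <= s k) ->
  (forall k, [/\ 0 <= o k, o k <= o' k & o' k <= 1]) ->
  Rnum beta bmin gamma gmin s o' <= Rnum beta bmin gamma gmin s o.
Proof.
move=> s_ge0 oo'.
have o0 k : 0 <= o k by case: (oo' k).
have o'0 k : 0 <= o' k by case: (oo' k) => ok oko' _; apply: le_trans oko'.
have B'0 : mx_nonneg (Bmat beta bmin o') by apply: Bmat_ge0 => k; case: (oo' k).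
apply: spectral_radius_le => i j; rewrite !Rnum_mxE //;
  have gi_gt0 := Gmat_entry_gt0 (o0 i); have gi'_gt0 := Gmat_entry_gt0 (o'0 i).
  by rewrite !mulr_ge0 ?invr_ge0 ?(ltW gi'_gt0).
have [_ oko' _] := oo' i.
apply: ler_pM.
- by rewrite invr_ge0 ltW.
- by rewrite mulr_ge0.
- by rewrite lef_pV2 ?posrE // lerD2l ler_wpM2l ?subr_ge0.
- by rewrite ler_wpM2l // Bmat_le.
Qed.

End Model.

Section Solution.
Variables (R : realType) (n : nat).
Variables (beta : 'M[R]_n) (bmin : R) (gamma : 'I_n -> R) (gmin : R) (abar : 'M[R]_n).
Variables (s x o : 'I_n -> R -> R).
Hypothesis s0_in01 : forall i, 0 <= s i 0 <= 1.
Hypothesis x0_ge0 : forall i, 0 <= x i 0.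
Hypothesis o0_in01 : forall i, 0 <= o i 0 <= 1.
Hypothesis bmin_ge0 : 0 <= bmin.
Hypothesis beta_ge_bmin : forall i j, 0 < beta i j -> bmin <= beta i j.
Hypothesis abar_ge0 : forall i j, 0 <= abar i j.
Hypothesis s_cont : forall i, {within [set t : R | 0 <= t], continuous (s i)}.
Hypothesis x_cont : forall i, {within [set t : R | 0 <= t], continuous (x i)}.
Hypothesis o_cont : forall i, {within [set t : R | 0 <= t], continuous (o i)}.
Hypothesis sol_deriv : forall t : R, 0 < t -> forall i,
    let ot := fun k => o k t in
    let xt := \col_k x k t in
    let st := fun k => s k t in
    let BX := (Stilde st *m Bmat beta bmin ot *m xt) i 0 in
    [/\ is_derive t 1 (s i) (- BX),
        is_derive t 1 (x i) (BX - (Gmat gamma gmin ot *m xt) i 0) &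
        is_derive t 1 (o i)
          ((1 - s i t) - ((laplacian abar + 1%:M) *m \col_k o k t) i 0)].

Let B (t : R) := Bmat beta bmin (o^~ t).
Let Bx i (t : R) := \sum_j B t i j * x j t.
Let g i (t : R) := gmin + (gamma i - gmin) * o i t.
Let deg i := \sum_k abar i k.
Let Ao i (t : R) := \sum_j abar i j * o j t.

Lemma susceptible_deriv i (t : R) : 0 < t -> is_derive t 1 (s i) (- (s i t * Bx i t)).
Proof. by move=> t0; have [+ _ _] := sol_deriv t0 i; rewrite Stilde_mulmx_col. Qed.

Lemma infected_deriv i (t : R) : 0 < t ->
  is_derive t 1 (x i) (s i t * Bx i t - g i t * x i t).
Proof.
by move=> t0; have [_ + _] := sol_deriv t0 i; rewrite Stilde_mulmx_col Gmat_mulmx_col.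
Qed.

Lemma opinion_deriv i (t : R) : 0 < t ->
  is_derive t 1 (o i) (1 - s i t - ((deg i + 1) * o i t - Ao i t)).
Proof. by move=> t0; have [_ _ +] := sol_deriv t0 i; rewrite laplacian_mulmx_col. Qed.

Lemma l1norm_B_bounded (T : R) : 0 <= T ->
  exists2 K, 0 <= K & forall t, 0 <= t <= T -> l1norm (B t) <= K.
Proof.
move=> T0; have [Ko Ko0 o_le] := within_ge0_bounded o_cont T0.
exists (\sum_i \sum_j (`|beta i j| + `|beta i j - bmin| * Ko)).
  by apply: sumr_ge0 => i _; apply: sumr_ge0 => j _; rewrite addr_ge0 ?mulr_ge0.
by move=> t tT; apply: l1norm_Bmat_le => i; apply: o_le.
Qed.

Lemma susceptible_ge0 (t : R) i : 0 <= t -> 0 <= s i t.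
Proof.
apply: (ge0_of_quasi_positive (dy := fun i t => - (s i t * Bx i t))) => //.
- by move=> j; case/andP: (s0_in01 j).
- exact: susceptible_deriv.
move=> T T0; have [KB KB0 B_le] := l1norm_B_bounded (ltW T0).
have [Kx Kx0 x_le] := within_ge0_bounded x_cont (ltW T0).
exists (KB * Kx) => [|u j phi /andP[u0 uT] phi0 _ ->]; first exact: mulr_ge0.
have uI : 0 <= u <= T by rewrite ltW.
have Bx_le : `|Bx j u| <= KB * Kx.
  apply: le_trans (ler_norm_sum_l1norm (B u) j (fun k => x_le k u uI)) _.
  by rewrite ler_wpM2r // B_le.
by rewrite mulNr opprK mulrC; have := ler_norm (- Bx j u); rewrite normrN; nra.
Qed.

Lemma opinion_le1 (t : R) i : 0 <= t -> o i t <= 1.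
Proof.
move=> t0; rewrite -subr_ge0.
apply: (ge0_of_inward (y := fun i t => 1 - o i t)
  (dy := fun i t => - (1 - s i t - ((deg i + 1) * o i t - Ao i t))) _ _ _ _ i t0).
- move=> j; apply: within_continuousB => //.
  by apply: continuous_subspaceT => ?; apply: cst_continuous.
- by move=> j; case/andP: (o0_in01 j); rewrite subr_ge0.
- move=> j u u0; have := is_deriveB (is_derive_cst (1 : R) u 1) (opinion_deriv j u0).
  by rewrite sub0r.
move=> u j phi u0 phi0 o_le o_eq.
have Ao_le : Ao j u <= deg j * (1 + phi).
  rewrite /deg mulr_suml; apply: ler_sum => k _; apply: ler_wpM2l => //.
  by have := o_le k; lra.
have := susceptible_ge0 j (ltW u0); rewrite /=; nra.
Qed.

Lemma B_ge0 (t : R) : 0 <= t -> mx_nonneg (B t).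
Proof. by move=> t0; apply: Bmat_ge0 => // i; apply: opinion_le1. Qed.

Lemma infected_ge0 (t : R) i : 0 <= t -> 0 <= x i t.
Proof.
apply: (ge0_of_quasi_positive (dy := fun i t => s i t * Bx i t - g i t * x i t)) => //.
  exact: infected_deriv.
move=> T T0; have [KB KB0 B_le] := l1norm_B_bounded (ltW T0).
have [Ks Ks0 s_le] := within_ge0_bounded s_cont (ltW T0).
have [Ko Ko0 o_le] := within_ge0_bounded o_cont (ltW T0).
pose Kg := `|gmin| + (\sum_k `|gamma k - gmin|) * Ko.
exists (Ks * KB + Kg) => [|u j phi /andP[u0 uT] phi0 x_ge x_eq].
  by rewrite addr_ge0 ?mulr_ge0 // /Kg addr_ge0 ?mulr_ge0 ?sumr_ge0.
have uI : 0 <= u <= T by rewrite ltW.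
have Bx_ge : - (phi * KB) <= Bx j u.
  apply: le_trans (sum_mul_ge_l1norm j (B_ge0 (ltW u0)) (ltW phi0) x_ge).
  by rewrite lerN2; apply: ler_wpM2l; [exact: ltW | exact: B_le].
have g_le : `|g j u| <= Kg.
  apply: le_trans (ler_normD _ _) _; rewrite lerD2l normrM.
  apply: ler_pM => //; last exact: o_le.
  by rewrite (bigD1 j) //= lerDl sumr_ge0.
have s_le' := s_le j u uI; have s_ge := susceptible_ge0 j (ltW u0).
rewrite ger0_norm // in s_le'.
have g_ge : - Kg <= g j u by have := ler_norm (- g j u); rewrite normrN; lra.
have e1 : - (Ks * KB * phi) <= s j u * Bx j u.
  apply: le_trans (_ : s j u * - (phi * KB) <= _); last exact: ler_wpM2l.
  by have := mulr_ge0 (ltW phi0) KB0; nra.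
have e2 : - (Kg * phi) <= g j u * phi.
  by rewrite -mulNr; apply: ler_wpM2r => //; exact: ltW.
by rewrite x_eq mulrN opprK mulrDl opprD; lra.
Qed.

Lemma susceptible_le_init (t : R) i : 0 <= t -> s i t <= s i 0.
Proof.
move=> t0; rewrite -subr_ge0.
apply: (ge0_of_inward (y := fun i t => s i 0 - s i t)
  (dy := fun i t => s i t * Bx i t) _ _ _ _ i t0).
- move=> j; apply: within_continuousB => //.
  by apply: continuous_subspaceT => ?; apply: cst_continuous.
- by move=> j; rewrite subrr.
- move=> j u u0; have := is_deriveB (is_derive_cst (s j 0) u 1) (susceptible_deriv j u0).
  by rewrite sub0r opprK.
move=> u j phi /ltW u0 _ _ _; apply: mulr_ge0; first exact: susceptible_ge0.
apply: sumr_ge0 => k _; apply: mulr_ge0; [exact: B_ge0 | exact: infected_ge0].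
Qed.

Lemma opinion_ge0 (t : R) i : 0 <= t -> 0 <= o i t.
Proof.
apply: (ge0_of_inward (dy := fun i t => 1 - s i t - ((deg i + 1) * o i t - Ao i t))) => //.
- by move=> j; case/andP: (o0_in01 j).
- exact: opinion_deriv.
move=> u j phi u0 phi0 o_ge o_eq.
have Ao_ge : deg j * - phi <= Ao j u.
  by rewrite /deg mulr_suml; apply: ler_sum => k _; apply: ler_wpM2l.
have s_le1 : s j u <= 1.
  by have := susceptible_le_init j (ltW u0); case/andP: (s0_in01 j); lra.
have deg0 : 0 <= deg j by apply: sumr_ge0.
by rewrite /= o_eq; nra.
Qed.

Lemma solution_invariant (t : R) : 0 <= t ->
  (forall k, 0 <= s k t) /\ (forall k, 0 <= o k t <= 1).
Proof.
by move=> t0; split=> k; rewrite ?opinion_ge0 ?opinion_le1 ?susceptible_ge0.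
Qed.

End Solution.

Theorem corollary1 (R : realType) (n : nat)
  (beta : 'M[R]_n) (bmin : R) (gamma : 'I_n -> R) (gmin : R)
  (abar : 'M[R]_n)
  (s x o : 'I_n -> R -> R) :
  (* standing assumption *)
  (forall i, 0 <= s i 0 <= 1) ->
  (forall i, 0 <= x i 0 <= 1) ->
  (forall i, 0 <= o i 0 <= 1) ->
  (forall i, s i 0 + x i 0 <= 1) ->
  0 < gmin -> (forall i, gmin <= gamma i) ->
  0 < bmin -> (forall i j, 0 <= beta i j) ->
  (forall i j, 0 < beta i j -> bmin <= beta i j) ->
  (forall i j, 0 <= abar i j) ->
  strongly_connected beta -> strongly_connected abar ->
  (* (s, x, o) is a solution on t >= 0 *)
  (forall i, {within [set t : R | 0 <= t], continuous (s i)}) ->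
  (forall i, {within [set t : R | 0 <= t], continuous (x i)}) ->
  (forall i, {within [set t : R | 0 <= t], continuous (o i)}) ->
  (forall t : R, 0 < t -> forall i,
    let ot := fun k => o k t in
    let xt := \col_k x k t in
    let st := fun k => s k t in
    let BX := (Stilde st *m Bmat beta bmin ot *m xt) i 0 in
    [/\ is_derive t 1 (s i) (- BX),
        is_derive t 1 (x i) (BX - (Gmat gamma gmin ot *m xt) i 0) &
        is_derive t 1 (o i)
          ((1 - s i t) - ((laplacian abar + 1%:M) *m \col_k o k t) i 0)]) ->
  forall t : R, 0 <= t ->
    let st := fun k => s k t in
    let ot := fun k => o k t in
    Rnum beta bmin gamma gmin st (fun=> 1) <= Rnum beta bmin gamma gmin st ot
    /\ Rnum beta bmin gamma gmin st ot <= Rnum beta bmin gamma gmin st (fun=> 0).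
Proof.
move=> s0_in01 x0_in01 o0_in01 _ gmin_gt0 gamma_ge_gmin bmin_gt0 _ beta_ge_bmin
  abar_ge0 _ _ s_cont x_cont o_cont sol_deriv t t0 st ot.
have x0_ge0 i : 0 <= x i 0 by case/andP: (x0_in01 i).
have [s_ge0 o_in01] := solution_invariant s0_in01 x0_ge0 o0_in01 (ltW bmin_gt0)
  beta_ge_bmin abar_ge0 s_cont x_cont o_cont sol_deriv t0.
have Rnum_anti := Rnum_le (ltW bmin_gt0) beta_ge_bmin gmin_gt0 gamma_ge_gmin s_ge0.
split; apply: Rnum_anti => k; have /andP[ok0 ok1] := o_in01 k.
  by split; rewrite ?ler01.
by split; rewrite ?lexx.
Qed.
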